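(* Let $\xi=(\xi_+,\xi_-)\in\mathcal{P}^2$ be minimal and let $n\in\mathbb{Z}\setminus\{0\}$. Then there exists a CSCA $\mathbf{a}$ with $\mathbf{a}\xi=u^n\xi$ (i.e. $\xi$ is a glider with eigenvalue $u^n$ for some CSCA) if and only if $\xi\wedge\bar\xi$ divides $u^{-n}+u^{n}$ in $\mathcal{P}$.
   Context: $\mathcal{P}$ denotes the ring of Laurent polynomials in $u$ over $\mathbb{Z}_2$; $\bar p(u)=p(u^{-1})$, applied entrywise to vectors. $\mathcal{R}$ is the subring of palindromes ($\bar p=p$). A CSCA is a $2\times2$ matrix with entries in $\mathcal{R}$ and determinant $1$. A vector $\xi\in\mathcal{P}^2$ is minimal if $\xi_+$ and $\xi_-$ have no common non-invertible divisor in $\mathcal{P}$ (the invertible elements of $\mathcal{P}$ are the monomials). The wedge product is $\xi\wedge\eta=\xi_+\eta_-+\eta_+\xi_-$. *)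

From HB Require Import structures.
From mathcomp Require Import all_boot all_order all_algebra.
From mathcomp Require Import generic_quotient fraction.
Set Implicit Arguments. Unset Strict Implicit. Unset Printing Implicit Defensive.
Import GRing.Theory.
Local Open Scope ring_scope.
Local Open Scope quotient_scope.

(** Coefficient field Z_2 and the field of rational functions in u over Z_2,
    inside which the ring P of Laurent polynomials lives. *)
Definition F2 : fieldType := 'F_2.
Definition K : fieldType := {fraction {poly F2}}.

Definition u : K := tofrac 'X.

(** P : Laurent polynomials in u over Z_2, i.e. the elements p(u) u^(-k) *)
Definition inP (x : K) : Prop :=
  exists (p : {poly F2}) (k : nat), x = tofrac p / u ^+ k.

(** the involution bar : p(u) |-> p(u^-1), extended to rational functions
    (num(u)/den(u) |-> num(u^-1)/den(u^-1)). *)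
Definition cst (c : F2) : K := tofrac (c%:P).
Definition bar (x : K) : K :=
  let r := repr x in
  (map_poly cst (frac r).1).[u^-1] / (map_poly cst (frac r).2).[u^-1].

Definition inR (x : K) : Prop := inP x /\ bar x = x.

Definition dvdP (a b : K) : Prop := exists c, inP c /\ b = a * c.
Definition unitP (a : K) : Prop := exists c, inP c /\ a * c = 1.

(** vectors of P^2 are column vectors xi with xi_+ = xi 0 0, xi_- = xi 1 0 *)
Definition inP2 (xi : 'cV[K]_2) : Prop := inP (xi 0 0) /\ inP (xi 1 0).

Definition vbar (xi : 'cV[K]_2) : 'cV[K]_2 := map_mx bar xi.

Definition wedge (xi eta : 'cV[K]_2) : K := xi 0 0 * eta 1 0 + eta 0 0 * xi 1 0.

Definition minimal (xi : 'cV[K]_2) : Prop :=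
  forall d, inP d -> dvdP d (xi 0 0) -> dvdP d (xi 1 0) -> unitP d.

Definition CSCA (A : 'M[K]_2) : Prop := (forall i j, inR (A i j)) /\ \det A = 1.

From HB Require Import structures.
From mathcomp Require Import all_boot all_order all_algebra.
From mathcomp Require Import generic_quotient fraction ring.
Set Implicit Arguments.
Unset Strict Implicit.
Unset Printing Implicit Defensive.
Import GRing.Theory Num.Theory.
Local Open Scope ring_scope.

(* If A x = l x and A y = l' y over a ring of characteristic 2, and
   w = x /\ y, then w A = w l' + (l + l') x (y_-, y_+).  For a CSCA A with
   A xi = u^n xi, the bar involution gives A bar(xi) = u^-n bar(xi), so
   A = u^-n + c xi (bar xi_-, bar xi_+) with (xi /\ bar xi) c = u^-n + u^n;
   here xi /\ bar xi <> 0, as otherwise the off-diagonal entries force xi = 0.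
   The entries c xi_i bar xi_k of A lie in P, and since xi_+ and xi_- are
   coprime in P (Bezout), so does c.  Conversely, for such a c in P the same
   matrix is palindromic (c is, as a quotient of palindromes), has determinant
   u^-n (u^-n + c (xi /\ bar xi)) = 1 and eigenvalue u^n on xi. *)

Lemma ord2_cases (i : 'I_2) : i = 0 \/ i = 1.
Proof. by case: i => [[|[|//]] hi]; [left | right]; apply: val_inj. Qed.

Lemma rev_ord2_0 : rev_ord (0 : 'I_2) = 1.
Proof. exact: val_inj. Qed.

Lemma rev_ord2_1 : rev_ord (1 : 'I_2) = 0.
Proof. exact: val_inj. Qed.

Lemma sum_ord2 (V : nmodType) (F : 'I_2 -> V) : \sum_(i < 2) F i = F 0 + F 1.
Proof. by rewrite big_ord_recl big_ord1; congr (F _ + F _); apply: val_inj. Qed.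

Lemma det_mx22 (R : comPzRingType) (A : 'M[R]_2) :
  \det A = A 0 0 * A 1 1 - A 0 1 * A 1 0.
Proof.
rewrite (expand_det_row _ 0) !big_ord_recl big_ord0 /cofactor !det_mx11 !mxE /=.
have -> : lift 0 (0 : 'I_1) = 1 :> 'I_2 by exact: val_inj.
have -> : lift 1 (0 : 'I_1) = 0 :> 'I_2 by exact: val_inj.
by rewrite expr0 expr1 mul1r mulN1r mulrN addr0.
Qed.

Section Char2Gliders.
Variable R : comPzRingType.
Hypothesis R_char2 : 2%:R = 0 :> R.

Lemma addrr_char2 (x : R) : x + x = 0.
Proof. by rewrite -mulr2n -mulr_natr R_char2 mulr0. Qed.

Lemma addmx_char2 m n (M : 'M[R]_(m, n)) : M + M = 0.
Proof. by apply/matrixP => i j; rewrite !mxE addrr_char2. Qed.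

Lemma oppr_char2 (x : R) : - x = x.
Proof. by apply/eqP; rewrite eq_sym -subr_eq0 opprK addrr_char2. Qed.

Lemma eq_char2 (t x y : R) : x + (t + t) = y -> x = y.
Proof. by rewrite addrr_char2 addr0. Qed.

Local Notation wedgeR xi eta := (xi 0 0 * eta 1 0 + eta 0 0 * xi 1 0).

Definition wedge_row (eta : 'cV[R]_2) : 'rV[R]_2 := \row_j eta (rev_ord j) 0.

Lemma wedge_rowE (xi eta : 'cV[R]_2) : wedge_row eta *m xi = (wedgeR xi eta)%:M.
Proof.
apply/matrixP => i j; rewrite !ord1 !mxE sum_ord2 !mxE /=.
by rewrite rev_ord2_0 rev_ord2_1 mulr1n [eta 1 0 * _]mulrC.
Qed.

Definition glider_mx (l c : R) (xi eta : 'cV[R]_2) : 'M[R]_2 :=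
  l%:M + c *: (xi *m wedge_row eta).

Lemma glider_mxE l c xi eta i j :
  glider_mx l c xi eta i j = l *+ (i == j) + c * (xi i 0 * eta (rev_ord j) 0).
Proof. by rewrite !mxE big_ord1 !mxE. Qed.

Lemma glider_mx_mul l c xi eta :
  glider_mx l c xi eta *m xi = (l + c * wedgeR xi eta) *: xi.
Proof.
by rewrite mulmxDl mul_scalar_mx -scalemxAl -mulmxA wedge_rowE mul_mx_scalar
  scalerA scalerDl.
Qed.

Lemma scale_glider_mx k l c xi eta :
  k *: glider_mx l c xi eta = glider_mx (k * l) (k * c) xi eta.
Proof. by rewrite scalerDr scale_scalar_mx scalerA. Qed.

Lemma det_glider_mx l c xi eta :
  \det (glider_mx l c xi eta) = l * (l + c * wedgeR xi eta).
Proof. by rewrite det_mx22 !glider_mxE rev_ord2_0 rev_ord2_1 /=; ring. Qed.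

Lemma mulmx_wedge_row_swap (xi eta : 'cV[R]_2) :
  eta *m wedge_row xi = (wedgeR xi eta)%:M + xi *m wedge_row eta.
Proof.
apply/matrixP => i j; rewrite !mxE !big_ord1 !mxE.
case: (ord2_cases i) => ->; case: (ord2_cases j) => ->;
  rewrite ?rev_ord2_0 ?rev_ord2_1 /= ?addr0 ?add0r ?mulr1n.
- by apply: (@eq_char2 (xi 0 0 * eta 1 0)); ring.
- by rewrite mulrC.
- by rewrite mulrC.
- by apply: (@eq_char2 (xi 1 0 * eta 0 0)); ring.
Qed.

Lemma glider_mx_swap l c xi eta :
  glider_mx l c eta xi = glider_mx (l + c * wedgeR xi eta) c xi eta.
Proof.
by rewrite /glider_mx mulmx_wedge_row_swap scalerDr scale_scalar_mx raddfD addrA.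
Qed.

Lemma eigen_pair_glider_mx (A : 'M[R]_2) xi eta l l' :
  A *m xi = l *: xi -> A *m eta = l' *: eta ->
  wedgeR xi eta *: A = glider_mx (wedgeR xi eta * l') (l + l') xi eta.
Proof.
move=> Axi Aeta.
rewrite -mul_mx_scalar.
have -> : (wedgeR xi eta)%:M = xi *m wedge_row eta + eta *m wedge_row xi :> 'M_2.
  by rewrite [eta *m _]mulmx_wedge_row_swap addrCA addmx_char2 addr0.
rewrite mulmxDr !mulmxA Axi Aeta -!scalemxAl [eta *m _]mulmx_wedge_row_swap.
by rewrite scalerDr scale_scalar_mx /glider_mx scalerDl addrCA [l' * _]mulrC.
Qed.
End Char2Gliders.

Lemma map_wedge_row (R S : comPzRingType) (f : {rmorphism R -> S}) eta :
  map_mx f (wedge_row eta) = wedge_row (map_mx f eta).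
Proof. by apply/matrixP => i j; rewrite !mxE. Qed.

Lemma map_glider_mx (R S : comPzRingType) (f : {rmorphism R -> S}) l c xi eta :
  map_mx f (glider_mx l c xi eta) =
  glider_mx (f l) (f c) (map_mx f xi) (map_mx f eta).
Proof. by rewrite map_mxD map_scalar_mx map_mxZ map_mxM map_wedge_row. Qed.

Lemma fracE (R : idomainType) (x : {fraction R}) :
  x = tofrac \n_(repr x) / tofrac \d_(repr x).
Proof.
have d_neq0 : tofrac \d_(repr x) != 0 :> {fraction R}.
  by rewrite tofrac_eq0; exact: denom_ratioP.
apply: (mulIf d_neq0); rewrite divfK // -{1}[x]reprK.
unlock tofrac; rewrite -[_ * _]/(FracField.mul _ _) -FracField.pi_mul.
apply/eqmodP; rewrite /= FracField.equivfE /FracField.mulf /=.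
by rewrite !numden_Ratio ?mulr1 ?oner_neq0 ?denom_ratioP // mulrC.
Qed.

Lemma cst_is_zmod_morphism : zmod_morphism cst.
Proof. by move=> a b; rewrite /cst polyCB rmorphB. Qed.
HB.instance Definition _ :=
  GRing.isZmodMorphism.Build F2 K cst cst_is_zmod_morphism.

Lemma cst_is_monoid_morphism : monoid_morphism cst.
Proof. by split=> [|a b]; rewrite /cst ?polyCM ?tofracM // tofrac1. Qed.
HB.instance Definition _ :=
  GRing.isMonoidMorphism.Build F2 K cst cst_is_monoid_morphism.

Definition evalV (p : {poly F2}) : K := (map_poly cst p).[u^-1].

Lemma evalVD p q : evalV (p + q) = evalV p + evalV q.
Proof. by rewrite /evalV rmorphD hornerD. Qed.

Lemma evalVM p q : evalV (p * q) = evalV p * evalV q.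
Proof. by rewrite /evalV rmorphM hornerM. Qed.

Lemma evalV1 : evalV 1 = 1.
Proof. by rewrite /evalV rmorph1 hornerC. Qed.

Lemma evalVC c : evalV c%:P = cst c.
Proof. by rewrite /evalV map_polyC hornerC. Qed.

Lemma evalVX : evalV 'X = u^-1.
Proof. by rewrite /evalV map_polyX hornerX. Qed.

Lemma u_neq0 : u != 0.
Proof. by rewrite tofrac_eq0 polyX_eq0. Qed.

Lemma evalV_clear_denominators p : p != 0 ->
  exists (q : {poly F2}) k, q`_0 != 0 /\ evalV p * u ^+ k = tofrac q.
Proof.
elim/poly_ind: p => [|p c IHp]; first by rewrite eqxx.
have [-> | /IHp [q [k [q0 Eq]]] _] := eqVneq p 0.
  rewrite mul0r add0r polyC_eq0 => c0.
  by exists c%:P, 0%N; rewrite coefC expr0 mulr1 evalVC.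
exists (q + c *: 'X^(k.+1)), k.+1; split.
  by rewrite coefD coefZ coefXn mulr0 addr0.
rewrite evalVD evalVM evalVX evalVC mulrDl exprS mulrA divfK ?u_neq0 // Eq.
by rewrite -exprS tofracD -mul_polyC tofracM tofracXn.
Qed.

Lemma evalV_neq0 p : p != 0 -> evalV p != 0.
Proof.
move=> /evalV_clear_denominators [q [k [q0 Eq]]]; apply: contraNneq q0 => p0.
by move: Eq; rewrite p0 mul0r => /esym/eqP; rewrite tofrac_eq0 => /eqP->; rewrite coef0.
Qed.

Lemma barE n d : d != 0 -> bar (tofrac n / tofrac d) = evalV n / evalV d.
Proof.
move=> d0; set x := _ / _; have d'0 := denom_ratioP (repr x).
have /eqP := fracE x; rewrite {1}/x eqr_div ?tofrac_eq0 // -!tofracM tofrac_eq.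
move=> /eqP cross; apply/esym/eqP; rewrite /bar -!/(evalV _).
by rewrite eqr_div ?evalV_neq0 // -!evalVM cross.
Qed.

Lemma bar_tofrac p : bar (tofrac p) = evalV p.
Proof. by rewrite -[tofrac p]divr1 -tofrac1 barE ?oner_neq0 // evalV1 divr1. Qed.

Lemma K_char2 : 2%:R = 0 :> K.
Proof.
have F2_char2 : 2%:R = 0 :> F2 by apply/eqP.
by rewrite -(rmorph_nat cst) F2_char2 rmorph0.
Qed.

Lemma barD x y : bar (x + y) = bar x + bar y.
Proof.
have dx := denom_ratioP (repr x); have dy := denom_ratioP (repr y).
rewrite [x]fracE [y]fracE addf_div ?tofrac_eq0 // -!tofracM -tofracD !barE ?mulf_neq0 //.
by rewrite addf_div ?evalV_neq0 // -!evalVM -evalVD.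
Qed.

Lemma barM x y : bar (x * y) = bar x * bar y.
Proof.
have dx := denom_ratioP (repr x); have dy := denom_ratioP (repr y).
by rewrite [x]fracE [y]fracE mulf_div -!tofracM !barE ?mulf_neq0 // !evalVM mulf_div.
Qed.

Lemma bar_is_zmod_morphism : zmod_morphism bar.
Proof. by move=> x y; rewrite !(oppr_char2 K_char2) barD. Qed.
HB.instance Definition _ := GRing.isZmodMorphism.Build K K bar bar_is_zmod_morphism.

Lemma bar_is_monoid_morphism : monoid_morphism bar.
Proof. by split; [rewrite -tofrac1 bar_tofrac evalV1 | exact: barM]. Qed.
HB.instance Definition _ := GRing.isMonoidMorphism.Build K K bar bar_is_monoid_morphism.

Lemma barV x : bar x^-1 = (bar x)^-1.
Proof. exact: fmorphV. Qed.

Lemma bar_u : bar u = u^-1.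
Proof. by rewrite bar_tofrac evalVX. Qed.

Lemma bar_cst c : bar (cst c) = cst c.
Proof. by rewrite bar_tofrac evalVC. Qed.

Lemma bar_evalV p : bar (evalV p) = tofrac p.
Proof.
elim/poly_ind: p => [|p c IHp]; first by rewrite /evalV !rmorph0 horner0 rmorph0.
rewrite evalVD evalVM evalVX evalVC barD barM barV bar_u invrK IHp bar_cst.
by rewrite tofracD tofracM.
Qed.

Lemma barK : involutive bar.
Proof.
by move=> x; rewrite [x]fracE (barM (tofrac _)) barV !bar_tofrac barM barV !bar_evalV.
Qed.

Lemma bar_uz (n : int) : bar (u ^ n) = u ^ (- n).
Proof. by rewrite -exprz_inv -bar_u rmorphXz ?unitfE ?u_neq0. Qed.

Lemma inP_tofrac p : inP (tofrac p).
Proof. by exists p, 0%N; rewrite expr0 divr1. Qed.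

Lemma inP0 : inP 0.
Proof. by rewrite -tofrac0; exact: inP_tofrac. Qed.

Lemma inPD x y : inP x -> inP y -> inP (x + y).
Proof.
move=> [p [k ->]] [q [m ->]]; exists (p * 'X^m + q * 'X^k), (k + m)%N.
by rewrite addf_div ?expf_neq0 ?u_neq0 // exprD tofracD !tofracM !tofracXn.
Qed.

Lemma inPM x y : inP x -> inP y -> inP (x * y).
Proof.
move=> [p [k ->]] [q [m ->]]; exists (p * q), (k + m)%N.
by rewrite mulf_div exprD tofracM.
Qed.

Lemma inPMn x n : inP x -> inP (x *+ n).
Proof.
move=> Px; elim: n => [|n IHn]; first by rewrite mulr0n; exact: inP0.
by rewrite mulrS; apply: inPD.
Qed.

Lemma inP_uz (n : int) : inP (u ^ n).
Proof.
case: n => k; first by exists 'X^k, 0%N; rewrite expr0 divr1 tofracXn.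
by exists 1, k.+1; rewrite tofrac1 div1r.
Qed.

Lemma inP_evalV p : inP (evalV p).
Proof.
elim/poly_ind: p => [|p c IHp]; first by rewrite /evalV rmorph0 horner0; exact: inP0.
rewrite evalVD evalVM evalVX evalVC; apply: inPD; last exact: inP_tofrac.
by apply: inPM => //; exists 1, 1%N; rewrite tofrac1 div1r.
Qed.

Lemma inP_bar x : inP x -> inP (bar x).
Proof.
move=> [p [k ->]]; rewrite barM barV bar_tofrac -[u ^+ k]/(u ^ k%:Z) bar_uz.
by rewrite invr_expz opprK; apply: inPM; [exact: inP_evalV | exact: inP_uz].
Qed.

Lemma u_expn_eq1 k : (u ^+ k == 1) = (k == 0%N).
Proof.
apply/eqP/eqP => [|->]; last by rewrite expr0.
rewrite -tofracXn -tofrac1 => /eqP; rewrite tofrac_eq => /eqP.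
by move=> /(congr1 (size : {poly F2} -> nat)); rewrite size_polyXn size_poly1; case.
Qed.

Lemma u_expz_eq1 (m : int) : u ^ m = 1 -> m = 0.
Proof.
case: m => k; first by move=> /eqP; rewrite u_expn_eq1 => /eqP->.
by move=> /(congr1 GRing.inv); rewrite invr1 invrK => /eqP; rewrite u_expn_eq1.
Qed.

Lemma u_expzN_add_neq0 (n : int) : n != 0 -> u ^ (- n) + u ^ n != 0.
Proof.
apply: contraNneq => /eqP; rewrite addr_eq0 (oppr_char2 K_char2) => /eqP E.
suff /eqP : n + n = 0 by rewrite -mulr2n mulrn_eq0.
by apply: u_expz_eq1; rewrite expfzDr ?u_neq0 // -{1}E -expfzDr ?u_neq0 // addNr.
Qed.

Lemma dvdP_tofrac g p k : g %| p -> dvdP (tofrac g) (tofrac p / u ^+ k).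
Proof.
move=> /divpK Ep; exists (tofrac (p %/ g) / u ^+ k); split; first by exists (p %/ g), k.
by rewrite mulrA -tofracM [g * _]mulrC Ep.
Qed.

Lemma minimal_bezout (xi : 'cV[K]_2) : inP2 xi -> minimal xi ->
  exists x y, [/\ inP x, inP y & x * xi 0 0 + y * xi 1 0 = 1].
Proof.
move=> [[pa [ka ea]] [pb [kb eb]]] xi_min.
have [c [Pc gc]] : unitP (tofrac (gcdp pa pb)).
  apply: xi_min; first exact: inP_tofrac.
    by rewrite ea; apply/dvdP_tofrac/dvdp_gcdl.
  by rewrite eb; apply/dvdP_tofrac/dvdp_gcdr.
have [[e1 e2] /= /eqpP [[c1 c2] /= /andP [_ c2_neq0] Ebez]] := Bezoutp pa pb.
have Ebez' : cst c1 * (tofrac e1 * tofrac pa + tofrac e2 * tofrac pb) =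
             cst c2 * tofrac (gcdp pa pb).
  by rewrite /cst -!tofracM -tofracD -!tofracM !mul_polyC Ebez.
set k := cst c1 / cst c2 * c.
have Pk : inP k by apply: inPM => //; rewrite -fmorph_div; exact: inP_tofrac.
exists (k * tofrac e1 * u ^+ ka), (k * tofrac e2 * u ^+ kb); split.
- exact: inPM (inPM Pk (inP_tofrac e1)) (inP_uz ka).
- exact: inPM (inPM Pk (inP_tofrac e2)) (inP_uz kb).
have c2_neq0' : cst c2 != 0 by rewrite fmorph_eq0.
rewrite -gc -[tofrac (gcdp _ _)](mulfK c2_neq0') [_ * cst c2]mulrC -Ebez' /k ea eb.
have cancel_u z t m : z * u ^+ m * (t / u ^+ m) = z * t.
  by rewrite -mulrA [u ^+ m * _]mulrCA mulfV ?expf_neq0 ?u_neq0 // mulr1.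
by rewrite !cancel_u; ring.
Qed.

Lemma vbarK : involutive vbar.
Proof. by move=> xi; apply/matrixP => i j; rewrite !mxE barK. Qed.

Lemma bar_wedge_vbar xi : bar (wedge xi (vbar xi)) = wedge xi (vbar xi).
Proof. by rewrite /wedge !mxE barD (barM (xi 0 0)) (barM (bar _)) !barK addrC. Qed.

Lemma inP2_entry xi i : inP2 xi -> inP (xi i 0).
Proof. by case=> ? ?; case: (ord2_cases i) => ->. Qed.

Lemma glider_mx_CSCA (xi : 'cV[K]_2) (n : int) c :
  inP2 xi -> n != 0 -> inP c -> u ^ (- n) + u ^ n = wedge xi (vbar xi) * c ->
  CSCA (glider_mx (u ^ (- n)) c xi (vbar xi)) /\
  glider_mx (u ^ (- n)) c xi (vbar xi) *m xi = u ^ n *: xi.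
Proof.
move=> Pxi n0 Pc ES; set w := wedge xi (vbar xi) in ES *.
have w0 : w != 0.
  by move: (u_expzN_add_neq0 n0); apply: contraNneq => w0; rewrite ES w0 mul0r.
have bar_c : bar c = c.
  apply: (mulfI w0); rewrite -ES -[w in LHS]bar_wedge_vbar -barM -ES.
  by rewrite barD !bar_uz opprK addrC.
have cw : c * w = u ^ (- n) + u ^ n by rewrite mulrC ES.
have l_cw : u ^ (- n) + c * w = u ^ n by rewrite cw addrA (addrr_char2 K_char2) add0r.
have bar_A : map_mx bar (glider_mx (u ^ (- n)) c xi (vbar xi)) =
             glider_mx (u ^ (- n)) c xi (vbar xi).
  transitivity (glider_mx (bar (u ^ (- n))) (bar c) (vbar xi) (vbar (vbar xi))).
    exact: map_glider_mx.
  rewrite bar_uz opprK bar_c vbarK (glider_mx_swap K_char2).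
  by rewrite -/w cw addrCA (addrr_char2 K_char2) addr0.
split; last by rewrite glider_mx_mul -/w l_cw.
split; last by rewrite det_glider_mx l_cw -expfzDr ?u_neq0 // addNr expr0z.
move=> i j; split; last by move/matrixP/(_ i j): bar_A; rewrite [map_mx _ _ _ _]mxE.
rewrite glider_mxE; apply: inPD; first exact/inPMn/inP_uz.
by apply/inPM/inPM; rewrite ?mxE; [| exact: inP2_entry | exact/inP_bar/inP2_entry].
Qed.

Lemma minimal_entry_neq0 (xi : 'cV[K]_2) : minimal xi -> xi 0 0 = 0 -> xi 1 0 != 0.
Proof.
move=> xi_min a0; apply/eqP => b0.
have dvd00 : dvdP 0 0 by exists 0; split; [exact: inP0 | rewrite mul0r].
have [c [_]] := xi_min 0 inP0 (ltac:(by rewrite a0)) (ltac:(by rewrite b0)).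
by rewrite mul0r => /eqP; rewrite eq_sym oner_eq0.
Qed.

Lemma mulf_bar_eq0 x : (x * bar x == 0) = (x == 0).
Proof. by rewrite mulf_eq0 fmorph_eq0 orbb. Qed.

Lemma CSCA_eigen_glider_mx (A : 'M[K]_2) (xi : 'cV[K]_2) (n : int) :
  minimal xi -> n != 0 -> CSCA A -> A *m xi = u ^ n *: xi ->
  exists2 c, u ^ (- n) + u ^ n = wedge xi (vbar xi) * c &
             A = glider_mx (u ^ (- n)) c xi (vbar xi).
Proof.
move=> xi_min n0 [A_pal _] Axi; set w := wedge xi (vbar xi).
have Avbar : A *m vbar xi = u ^ (- n) *: vbar xi.
  have bar_A : map_mx bar A = A by apply/matrixP => i j; rewrite mxE; case: (A_pal i j).
  rewrite -[A in LHS]bar_A -map_mxM Axi.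
  transitivity (bar (u ^ n) *: vbar xi); first exact: map_mxZ.
  by rewrite bar_uz.
have wA : w *: A = glider_mx (w * u ^ (- n)) (u ^ (- n) + u ^ n) xi (vbar xi).
  by rewrite [u ^ (- n) + _]addrC; exact (eigen_pair_glider_mx K_char2 Axi Avbar).
have w0 : w != 0.
  apply: contraTneq (u_expzN_add_neq0 n0) => w0; rewrite w0 scale0r mul0r in wA.
  move/matrixP: wA => wA; move: (wA 0 1) (wA 1 0).
  rewrite !glider_mxE !mxE rev_ord2_0 rev_ord2_1 /= !add0r => /esym/eqP + /esym/eqP.
  rewrite !(mulf_eq0 (u ^ _ + _)) !mulf_bar_eq0 => /orP[-> // | /eqP a0] /orP[-> // | b0].
  by have := minimal_entry_neq0 xi_min a0; rewrite b0.
exists (w^-1 * (u ^ (- n) + u ^ n)); first by rewrite mulVKf.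
by rewrite -[A](scalerK w0) wA scale_glider_mx mulKf.
Qed.

Lemma inP_glider_mx_coef (xi : 'cV[K]_2) l c : inP2 xi -> minimal xi -> inP l ->
  (forall i j, inP (glider_mx l c xi (vbar xi) i j)) -> inP c.
Proof.
move=> Pxi xi_min Pl PA.
have [x [y [Px Py bez]]] := minimal_bezout Pxi xi_min.
have Pc_xi_bar i k : inP (c * (xi i 0 * bar (xi k 0))).
  have := glider_mxE l c xi (vbar xi) i (rev_ord k).
  rewrite rev_ordK [vbar _ _ _]mxE => E.
  have -> : c * (xi i 0 * bar (xi k 0)) =
            glider_mx l c xi (vbar xi) i (rev_ord k) + l *+ (i == rev_ord k).
    by rewrite E addrAC (addrr_char2 K_char2) add0r.
  by apply: inPD => //; exact: inPMn.
have Pc_bar k : inP (c * bar (xi k 0)).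
  have -> : c * bar (xi k 0) =
            x * (c * (xi 0 0 * bar (xi k 0))) + y * (c * (xi 1 0 * bar (xi k 0))).
    by rewrite -[LHS]mul1r -bez; ring.
  by apply: inPD; apply: inPM.
have bez_bar : bar x * bar (xi 0 0) + bar y * bar (xi 1 0) = 1.
  by rewrite -!barM -barD bez rmorph1.
have -> : c = bar x * (c * bar (xi 0 0)) + bar y * (c * bar (xi 1 0)).
  by rewrite -[LHS]mulr1 -bez_bar; ring.
by apply: inPD; apply: inPM => //; exact: inP_bar.
Qed.

Theorem mainTheorem2 (xi : 'cV[K]_2) (n : int) :
  inP2 xi -> minimal xi -> n != 0 ->
  (exists A : 'M[K]_2, CSCA A /\ A *m xi = u ^ n *: xi) <->
  dvdP (wedge xi (vbar xi)) (u ^ (- n) + u ^ n).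
Proof.
move=> Pxi xi_min n0; split.
- move=> [A [CA Axi]]; have [c Ec EA] := CSCA_eigen_glider_mx xi_min n0 CA Axi.
  move: CA; rewrite EA => -[PA _].
  exists c; split=> //; apply: (inP_glider_mx_coef Pxi xi_min (inP_uz (- n))) => i j.
  by case: (PA i j).
- move=> [c [Pc ES]]; exists (glider_mx (u ^ (- n)) c xi (vbar xi)).
  exact: glider_mx_CSCA.
Qed.
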